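(* Let $G=(N,A)$ be an $s$-$t$ directed graph, let $u,v\in N$ and let $k$ be a positive integer. If $u$ is the $k$-th ancestor of $v$ in the $s$-dominator tree of $G$, then $\mathrm{dom}_t(u,k)$ $t$-dominates $v$, and $v$ does not $t$-dominate $u$ unless $v=\mathrm{dom}_t(u,k)$.
   Context: An $s$-$t$ directed graph is a directed graph (not necessarily acyclic) with a unique source $s$ and unique sink $t$ such that every node is reachable from $s$ and every node reaches $t$. A node $u$ $s$-dominates $v$ if every $s$-$v$ path contains $u$ (every node $s$-dominates itself; strictly if $u\neq v$); a node $w$ $t$-dominates $v$ if every $v$-$t$ path contains $w$. For $v\ne s$ the immediate $s$-dominator of $v$ is the strict $s$-dominator of $v$ that is $s$-dominated by all strict $s$-dominators of $v$; the $s$-dominator tree is rooted at $s$ with the parent of each node being its immediate $s$-dominator. Immediate $t$-dominators and the $t$-dominator tree (rooted at $t$) are defined symmetrically. $\mathrm{dom}_t(u,k)$ denotes the $k$-th ancestor of $u$ in the $t$-dominator tree if $u$ has at least $k$ strict ancestors there, and $t$ otherwise (formally $\mathrm{dom}_t(u,1)$ is the immediate $t$-dominator of $u$ and $\mathrm{dom}_t(u,k)=\mathrm{dom}_t(\mathrm{dom}_t(u,1),k-1)$, defaulting to $t$). *)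

From mathcomp Require Import all_boot.
From Stdlib Require Import ClassicalEpsilon.
Set Implicit Arguments. Unset Strict Implicit. Unset Printing Implicit Defensive.

(* A directed graph on a finite node type T with edge relation e : rel T.
   A path from x to y is x :: p with [path e x p] and [last x p = y];
   its node set is x :: p. *)

Section Dominators.
Variables (T : finType) (e : rel T) (s t : T).

Definition st_graph : Prop :=
  [/\ forall x, ~~ e x s, forall x, ~~ e t x,
      forall v, connect e s v & forall v, connect e v t].

Definition sdom (u v : T) : Prop :=
  forall p, path e s p -> last s p = v -> u \in s :: p.

Definition tdom (w v : T) : Prop :=
  forall p, path e v p -> last v p = t -> w \in v :: p.

Definition is_idom_s (u v : T) : Prop :=
  v <> s /\ u <> v /\ sdom u v /\ (forall w, w <> v -> sdom w v -> sdom w u).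

Definition is_idom_t (u v : T) : Prop :=
  v <> t /\ u <> v /\ tdom u v /\ (forall w, w <> v -> tdom w v -> tdom w u).

Fixpoint sdom_anc (k : nat) (u v : T) : Prop :=
  match k with
  | 0 => u = v
  | k'.+1 => exists w, is_idom_s w v /\ sdom_anc k' u w
  end.

(* immediate t-dominator as a function, defaulting to t when it does not
   exist (i.e. for v = t) *)
Definition idom_t (v : T) : T :=
  match excluded_middle_informative (exists w, is_idom_t w v) with
  | left H => proj1_sig (constructive_indefinite_description _ H)
  | right _ => t
  end.

Definition dom_t (u : T) (k : nat) : T := iter k idom_t u.

End Dominators.

From mathcomp Require Import all_boot.
From Stdlib Require Import Classical ClassicalEpsilon.
Set Implicit Arguments. Unset Strict Implicit. Unset Printing Implicit Defensive.

(* Let v = f 0, f 1, ..., f k = u be the path from v up to u in the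
   s-dominator tree and W j = dom_t(u, j).  Two exchange properties between
   the two kinds of dominance drive the proof; both come from splicing an s-v
   path through u with a v-t path.  First, a t-dominator x <> u of u that does
   not t-dominate v s-dominates v but not u, so x is one of f 1, ..., f (k-1).
   Second, if v t-dominates u, every f j t-dominates u and is t-dominated by
   v, so it lies on the t-dominator chain of u before v.  Hence if W k did not
   t-dominate v, the k+1 distinct nodes W 0, ..., W k would all lie among
   f 1, ..., f k; and if v t-dominates u but v = W m with m < k, the k+1
   distinct nodes f 0, ..., f k would all lie among W 0, ..., W m. *)

Lemma split_at_first (T : eqType) (P : T -> Prop) (p : seq T) x :
  x \in p -> P x ->
  exists s1 a s2, [/\ p = s1 ++ a :: s2, P a & forall y, y \in s1 -> ~ P y].
Proof.
elim: p => // y p IHp; have [Py _ _|nPy] := classic (P y); first by exists [::], y, p.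
rewrite inE => /predU1P[-> /nPy //|xp Px].
have [s1 [a [s2 [-> Pa s1_nP]]]] := IHp xp Px.
by exists (y :: s1), a, s2; split=> // z; rewrite inE => /predU1P[-> //|/s1_nP].
Qed.

Lemma inj_map_ltn_size (T : eqType) (g h : nat -> T) n (J : seq nat) :
  {in [pred j | j <= n] &, injective g} ->
  (forall j, j <= n -> g j \in [seq h i | i <- J]) -> n < size J.
Proof.
move=> g_inj gJ; rewrite -(size_iota 0 n.+1) -(size_map g) -(size_map h).
apply: uniq_leq_size.
  by rewrite map_inj_in_uniq ?iota_uniq // => i j; rewrite !mem_iota; apply: g_inj.
by move=> y /mapP[j]; rewrite mem_iota => /andP[_ /gJ jJ] ->.
Qed.

Section Chains.
Variables (T : eqType) (R : T -> T -> Prop) (g : nat -> T).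
Hypotheses (R_refl : forall x, R x x)
  (R_trans : forall x y z, R x y -> R y z -> R x z)
  (R_anti : forall x y, R x y -> R y x -> x = y).

Lemma chain_le n : (forall j, j < n -> R (g j.+1) (g j)) ->
  forall i j, i <= j -> j <= n -> R (g j) (g i).
Proof.
move=> step i; elim=> [|j IHj]; first by rewrite leqn0 => /eqP-> _.
rewrite leq_eqVlt => /predU1P[-> _ //|ij jn].
exact: R_trans (step j jn) (IHj ij (ltnW jn)).
Qed.

Lemma chain_inj n : (forall j, j < n -> R (g j.+1) (g j)) ->
  (forall j, j < n -> g j.+1 <> g j) -> {in [pred j | j <= n] &, injective g}.
Proof.
move=> step neq.
suff lt_neq i j : i < j -> j <= n -> g i <> g j.
  move=> i j /= i_n j_n gij.
  by case: (ltngtP i j) => // [ij|ji]; [case: (lt_neq i j) | case: (lt_neq j i)].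
move=> ij j_n gij; apply: (neq i (leq_trans ij j_n)); apply: R_anti.
  exact: chain_le step _ _ (leqnSn i) (leq_trans ij j_n).
by rewrite gij; apply: chain_le step _ _ ij j_n.
Qed.

Lemma chain_mem n x :
  (forall j, j < n -> forall w, w <> g j -> R w (g j) -> R w (g j.+1)) ->
  R x (g 0) -> (exists2 m, m < n & x = g m) \/ R x (g n).
Proof.
elim: n => [|n IHn] step x_g0; first by right.
have [[m mn ->]|x_gn] := IHn (fun j jn => step j (leqW jn)) x_g0.
  by left; exists m; first exact: leqW.
have [->|/eqP xn] := eqVneq x (g n); first by left; exists n.
by right; apply: step.
Qed.

End Chains.

Lemma simple_path (T : finType) (e : rel T) x y : connect e x y ->
  exists p, [/\ path e x p, last x p = y & uniq (x :: p)].
Proof. by case/connectP=> p ep ->; case/shortenP: ep => q eq uq _; exists q. Qed.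

Lemma split_path (T : eqType) (e : rel T) x y z p :
  path e x p -> last x p = y -> z \in x :: p ->
  exists p1 p2, [/\ p = p1 ++ p2, path e x p1, last x p1 = z, path e z p2 & last z p2 = y].
Proof.
move=> ep lp zp; move: ep lp; case/splitPl: zp => p1 p2 lp1.
rewrite cat_path last_cat lp1 => /andP[ep1 ep2] lp2.
by exists p1, p2.
Qed.

Section SDominance.
Variables (T : finType) (e : rel T) (r : T).
Local Notation sdom := (sdom e r).

Lemma sdom_refl v : sdom v v.
Proof. by move=> p _ <-; apply: mem_last. Qed.

Lemma sdom_trans a b c : sdom a b -> sdom b c -> sdom a c.
Proof.
move=> ab bc p ep lp; have [p1 [p2 [-> ep1 lp1 _ _]]] := split_path ep lp (bc p ep lp).
by rewrite -cat_cons mem_cat (ab p1 ep1 lp1).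
Qed.

Lemma sdom_antisym a b : connect e r b -> sdom a b -> sdom b a -> a = b.
Proof.
case/simple_path=> p [ep lp up] ab ba.
have [p1 [p2 [def_p ep1 lp1 _ lp2]]] := split_path ep lp (ab p ep lp).
move: up; rewrite def_p; have := ba p1 ep1 lp1; case: p2 lp2 {def_p} => [<- //|y p2 <- b_p1].
by rewrite -cat_cons cat_uniq => /and3P[_ /hasP[]]; exists (last y p2); rewrite ?mem_last.
Qed.

Lemma not_sdom a b : ~ sdom a b ->
  exists2 p, path e r p & last r p = b /\ a \notin r :: p.
Proof.
move=> nab; apply: NNPP => nex; apply: nab => p ep lp.
by case: (boolP (a \in r :: p)) => // a_p; case: nex; exists p.
Qed.

End SDominance.

Lemma all_paths_rev (T : finType) (e : rel T) x y w :
  (forall p, path e x p -> last x p = y -> w \in x :: p) ->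
  forall q, path [rel a b | e b a] y q -> last y q = x -> w \in y :: q.
Proof.
move=> all_p q eq lq; have := all_p (rev (belast y q)).
rewrite -lq rev_path -(last_cons (last y q)) -rev_rcons -lastI mem_rev.
by rewrite rev_cons last_rcons; apply.
Qed.

Lemma tdom_sdom_rev (T : finType) (e : rel T) t w v :
  tdom e t w v <-> sdom [rel x y | e y x] t w v.
Proof. by split; [apply: all_paths_rev | apply: (all_paths_rev (e := [rel x y | e y x]))]. Qed.

Section TDominance.
Variables (T : finType) (e : rel T) (t : T).
Local Notation tdom := (tdom e t).

Lemma tdom_refl v : tdom v v.
Proof. by move=> p _ _; apply: mem_head. Qed.

Lemma tdom_t v : tdom t v.
Proof. by move=> p _ <-; apply: mem_last. Qed.

Lemma tdom_tt w : tdom w t -> w = t.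
Proof. by move/(_ [::] isT erefl); rewrite inE => /eqP. Qed.

Lemma tdom_trans a b c : tdom a b -> tdom b c -> tdom a c.
Proof. by move=> /tdom_sdom_rev ab /tdom_sdom_rev bc; apply/tdom_sdom_rev/(sdom_trans ab). Qed.

Lemma tdom_antisym a b : connect e b t -> tdom a b -> tdom b a -> a = b.
Proof.
move=> bt /tdom_sdom_rev ab /tdom_sdom_rev ba.
by apply: sdom_antisym ab ba; rewrite connect_rev.
Qed.

Lemma not_tdom w v : ~ tdom w v ->
  exists2 p, path e v p & last v p = t /\ w \notin v :: p.
Proof.
move=> nwv; apply: NNPP => nex; apply: nwv => p ep lp.
by case: (boolP (w \in v :: p)) => // w_p; case: nex; exists p.
Qed.

End TDominance.

Lemma sdom_anc_chain (T : finType) (e : rel T) s k u v : sdom_anc e s k u v ->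
  exists f : nat -> T,
    [/\ f 0 = v, f k = u & forall j, j < k -> is_idom_s e s (f j.+1) (f j)].
Proof.
elim: k v => [|k IHk] v /=; first by move=> ->; exists (fun=> v).
case=> w [w_v /IHk[f [f0 fk f_idom]]].
exists (fun j => if j is j'.+1 then f j' else v).
by split=> // -[|j] /= jk; [rewrite f0 | apply: f_idom].
Qed.

Section STGraph.
Variables (T : finType) (e : rel T) (s t : T).
Hypotheses (from_s : forall v, connect e s v) (to_t : forall v, connect e v t).
Local Notation sdom := (sdom e s).
Local Notation tdom := (tdom e t).
Local Notation idom_t := (idom_t e t).
Local Notation dom_t := (dom_t e t).

Lemma idom_t_t : idom_t t = t.
Proof. by rewrite /idom_t; case: excluded_middle_informative => // -[w []]. Qed.

Lemma idom_t_exists x : x <> t -> exists w, is_idom_t e t w x.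
Proof.
move=> xt; have [p [ep lp ux]] := simple_path (to_t x).
have t_p : t \in p by case: p lp {ep ux} => [|y p] /= lp; [by [] | rewrite -lp mem_last].
have [p1 [a [p2 [def_p a_x p1_nx]]]] := split_at_first (P := tdom^~ x) t_p (@tdom_t _ e t x).
exists a; split=> //; split.
  by move=> ax; move: ux; rewrite def_p /= ax mem_cat mem_head orbT.
split=> // w wx w_x q eq lq.
move: ep; rewrite def_p cat_path => /andP[ep1 /andP[e_a _]].
have := w_x (p1 ++ a :: q); rewrite cat_path ep1 /= e_a eq last_cat => /(_ isT lq).
rewrite -cat_cons mem_cat => /orP[|//].
by rewrite inE => /predU1P[/wx|/p1_nx/(_ w_x)].
Qed.

Lemma idom_tP x : x <> t -> is_idom_t e t (idom_t x) x.
Proof.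
move/idom_t_exists=> ex; rewrite /idom_t.
case: excluded_middle_informative => [ex'|/(_ ex)//].
by case: (constructive_indefinite_description _ ex').
Qed.

Lemma idom_t_tdom x : tdom (idom_t x) x.
Proof.
have [->|/eqP/idom_tP[_ [_ []]] //] := eqVneq x t.
by rewrite idom_t_t; apply: tdom_refl.
Qed.

Lemma tdom_idom_t x w : w <> x -> tdom w x -> tdom w (idom_t x).
Proof.
have [-> wt /tdom_tt/wt //|/eqP/idom_tP[_ [_ [_ imm]]]] := eqVneq x t.
exact: imm.
Qed.

Lemma dom_t_tdom u i j : i <= j -> tdom (dom_t u j) (dom_t u i).
Proof.
move=> ij; apply: (chain_le (@tdom_refl _ e t) (@tdom_trans _ e t) _ ij (leqnn j)).
by move=> l _; apply: idom_t_tdom.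
Qed.

Lemma dom_t_inj u n :
  dom_t u n <> t -> {in [pred j | j <= n] &, injective (dom_t u)}.
Proof.
move=> un_t; have tdom_anti a b := tdom_antisym (to_t b) (a := a).
apply: (chain_inj (@tdom_refl _ e t) (@tdom_trans _ e t) tdom_anti).
  by move=> j _; apply: idom_t_tdom.
move=> j jn; have uj_t : dom_t u j <> t.
  by move=> uj_t; apply: un_t; move: (dom_t_tdom (u := u) (ltnW jn)); rewrite uj_t => /tdom_tt.
by case: (idom_tP uj_t) => _ [].
Qed.

Lemma dom_t_mem u n x :
  tdom x u -> (exists2 m, m < n & x = dom_t u m) \/ tdom x (dom_t u n).
Proof. by apply: (chain_mem (g := dom_t u)) => j _ w; apply: tdom_idom_t. Qed.

Lemma sdom_of_tdom u v x : sdom u v -> tdom x u -> ~ tdom x v -> sdom x v.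
Proof.
move=> uv xu /not_tdom[P eP [lP]]; rewrite inE negb_or => /andP[_ /negbTE xP].
move=> R eR lR; have [r1 [r2 [-> _ lr1 er2 lr2]]] := split_path eR lR (uv R eR lR).
have := xu (r2 ++ P); rewrite cat_path er2 lr2 eP last_cat lr2 => /(_ isT lP).
rewrite -cat_cons mem_cat xP orbF -cat_cons mem_cat inE => /predU1P[->|->].
  by rewrite -lr1 mem_last.
by rewrite orbT.
Qed.

Lemma not_sdom_of_tdom u v x :
  sdom u v -> tdom x u -> ~ tdom x v -> x <> u -> ~ sdom x u.
Proof.
move=> uv xu /not_tdom[P eP [lP]]; rewrite inE negb_or => /andP[_ /negbTE xP] xnu xu_s.
have [R [eR lR uR]] := simple_path (from_s v).
have [r1 [r2 [def_R er1 lr1 er2 lr2]]] := split_path eR lR (uv R eR lR).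
have := xu (r2 ++ P); rewrite cat_path er2 lr2 eP last_cat lr2 => /(_ isT lP).
rewrite inE mem_cat xP orbF => /predU1P[/xnu //|x_r2].
move: uR; rewrite def_R -cat_cons cat_uniq => /and3P[_ /hasP[]].
by exists x; last exact: xu_s er1 lr1.
Qed.

Lemma sdom_between_tdom_l u v x :
  sdom u x -> sdom x v -> x <> u -> tdom v u -> tdom x u.
Proof.
move=> ux xv xnu vu.
have /not_sdom[S eS [lS]] : ~ sdom x u.
  by move=> xu; apply: xnu; apply: sdom_antisym (from_s u) xu ux.
move/negbTE=> xS Q eQ lQ; have [q1 [q2 [-> eq1 lq1 _ _]]] := split_path eQ lQ (vu Q eQ lQ).
have := xv (S ++ q1); rewrite cat_path eS lS eq1 last_cat lS => /(_ isT lq1).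
by rewrite -cat_cons mem_cat xS /= -cat_cons mem_cat inE => ->; rewrite !orbT.
Qed.

Lemma sdom_between_tdom_r u v x :
  sdom u x -> sdom x v -> x <> v -> tdom v u -> tdom v x.
Proof.
move=> ux xv xnv vu.
have /not_sdom[S eS [lS vS]] : ~ sdom v x.
  by move=> vx; apply: xnv; apply: sdom_antisym (from_s v) xv vx.
move=> R eR lR; have [s1 [s2 [def_S _ ls1 es2 ls2]]] := split_path eS lS (ux S eS lS).
have := vu (s2 ++ R); rewrite cat_path es2 ls2 eR last_cat ls2 => /(_ isT lR).
rewrite -cat_cons mem_cat => /orP[v_s2|v_R]; last by rewrite inE v_R orbT.
case/negP: vS; rewrite def_S -cat_cons mem_cat; move: v_s2; rewrite inE => /predU1P[->|->].
  by rewrite -ls1 mem_last.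
by rewrite orbT.
Qed.

Section SDominatorChain.
Variables (k : nat) (f : nat -> T).
Hypothesis f_idom : forall j, j < k -> is_idom_s e s (f j.+1) (f j).

Lemma sdom_chain i j : i <= j -> j <= k -> sdom (f j) (f i).
Proof.
apply: (chain_le (@sdom_refl _ e s) (@sdom_trans _ e s)).
by move=> l /f_idom[_ [_ []]].
Qed.

Lemma sdom_chain_inj : {in [pred j | j <= k] &, injective f}.
Proof.
have sdom_anti a b := sdom_antisym (from_s b) (a := a).
apply: (chain_inj (@sdom_refl _ e s) (@sdom_trans _ e s) sdom_anti).
  by move=> j /f_idom[_ [_ []]].
by move=> j /f_idom[_ []].
Qed.

Lemma sdom_chain_mem x :
  sdom x (f 0) -> (exists2 m, m < k & x = f m) \/ sdom x (f k).
Proof. by apply: chain_mem => j /f_idom[_ [_ [_]]]. Qed.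

Lemma tdom_dom_t_anc : tdom (dom_t (f k) k) (f 0).
Proof.
apply: NNPP => nWv; set W := dom_t (f k) in nWv *.
have W_nv j : j <= k -> ~ tdom (W j) (f 0).
  by move=> jk /(tdom_trans (dom_t_tdom (u := f k) jk)).
have k_gt0 : 0 < k.
  by rewrite lt0n; apply/eqP => k0; apply: (W_nv 0 (leq0n k)); rewrite /W /= k0; apply: tdom_refl.
have Wk_t : W k <> t by move=> Wt; apply: nWv; rewrite Wt; apply: tdom_t.
have W_in_f j : j <= k -> W j \in [seq f i | i <- iota 1 k].
  move=> jk; have [->|/eqP Wnu] := eqVneq (W j) (f k).
    by rewrite map_f // mem_iota k_gt0 add1n ltnSn.
  have Wu : tdom (W j) (f k) := dom_t_tdom (u := f k) (leq0n j).
  have uv := sdom_chain (leq0n k) (leqnn k).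
  case: (sdom_chain_mem (sdom_of_tdom uv Wu (W_nv j jk))) => [[[|m] mk Wm]|].
  - by case: (W_nv j jk); rewrite Wm; apply: tdom_refl.
  - by rewrite Wm map_f // mem_iota add1n !ltnS leq0n ltnW.
  - by move/(not_sdom_of_tdom uv Wu (W_nv j jk) Wnu).
by have := inj_map_ltn_size (dom_t_inj Wk_t) W_in_f; rewrite size_iota ltnn.
Qed.

Lemma eq_dom_t_anc : tdom (f 0) (f k) -> f 0 = dom_t (f k) k.
Proof.
move=> vu; set W := dom_t (f k).
have [[m mk v_Wm]|v_Wk] := dom_t_mem k vu; last first.
  exact: tdom_antisym (to_t _) v_Wk tdom_dom_t_anc.
have f_in_W j : j <= k -> f j \in [seq W i | i <- iota 0 m.+1].
  move=> jk; have [->|/eqP fnv] := eqVneq (f j) (f 0).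
    by rewrite v_Wm map_f // mem_iota leq0n add0n ltnSn.
  have [->|/eqP fnu] := eqVneq (f j) (f k).
    by apply: (map_f W (x := 0)); rewrite mem_iota leq0n add0n ltn0Sn.
  have uf := sdom_chain jk (leqnn k); have fv := sdom_chain (leq0n j) jk.
  have [[m' m'm ->]|f_Wm] := dom_t_mem m (sdom_between_tdom_l uf fv fnu vu).
    by rewrite map_f // mem_iota leq0n add0n ltnS ltnW.
  have vf := sdom_between_tdom_r uf fv fnv vu.
  by case: fnv; apply: tdom_antisym (to_t _) _ vf; rewrite v_Wm.
by have := inj_map_ltn_size sdom_chain_inj f_in_W; rewrite size_iota ltnS leqNgt mk.
Qed.

End SDominatorChain.

End STGraph.

Theorem lemma3 (T : finType) (e : rel T) (s t : T) (u v : T) (k : nat) :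
  st_graph e s t -> 0 < k -> sdom_anc e s k u v ->
  tdom e t (dom_t e t u k) v /\
  (tdom e t v u -> v = dom_t e t u k).
Proof.
case=> _ _ from_s to_t _ /sdom_anc_chain[f [<- <- f_idom]].
by split; [apply: tdom_dom_t_anc f_idom | apply: eq_dom_t_anc f_idom].
Qed.
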